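(* Let $M$ be a $po$-$\Gamma$-semigroup. The following are equivalent: (1) $M$ is strongly regular. (2) $M$ is left regular, right regular, and for every $a\in M$ the set $(M\Gamma a\Gamma M]$ is a strongly regular sub-$\Gamma$-semigroup of $M$. (3) For every $a\in M$, $a\in (M\Gamma a]\cap (a\Gamma M]$ and $(M\Gamma a\Gamma M]$ is a strongly regular sub-$\Gamma$-semigroup of $M$.
   Context: A $po$-$\Gamma$-semigroup is a triple $(M,\Gamma,\le)$ where $M,\Gamma$ are nonempty sets with a map $M\times\Gamma\times M\to M$, $(a,\gamma,b)\mapsto a\gamma b$, satisfying $(a\gamma b)\mu c=a\gamma(b\mu c)$ for all $a,b,c\in M$, $\gamma,\mu\in\Gamma$, and $\le$ is a partial order on $M$ such that $a\le b$ implies $a\gamma c\le b\gamma c$ and $c\gamma a\le c\gamma b$ for all $c\in M$, $\gamma\in\Gamma$. For $A,B\subseteq M$, $A\Gamma B=\{a\gamma b: a\in A,\gamma\in\Gamma,b\in B\}$ (with $a\Gamma B$ meaning $\{a\}\Gamma B$, etc.), and $(A]=\{t\in M: t\le a \text{ for some } a\in A\}$. $M$ is left regular if $a\in(M\Gamma a\Gamma a]$ for all $a\in M$; right regular if $a\in(a\Gamma a\Gamma M]$ for all $a\in M$. A nonempty subset $T\subseteq M$ is a sub-$\Gamma$-semigroup if $T\Gamma T\subseteq T$; it is then a $po$-$\Gamma$-semigroup with the restricted operation and order. A $po$-$\Gamma$-semigroup $T$ is strongly regular if for every $a\in T$ there exist $x\in T$ and $\gamma,\mu\in\Gamma$ such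 that $a\le a\gamma x\mu a$ and $a\gamma x=x\gamma a=x\mu a=a\mu x$. *)

From Stdlib Require Import Classical.

Set Implicit Arguments.

Record poGammaSemigroup (M G : Type) := {
  op : M -> G -> M -> M;
  le : M -> M -> Prop;
  op_assoc : forall (a b c : M) (g m : G), op (op a g b) m c = op a g (op b m c);
  le_refl : forall a, le a a;
  le_antisym : forall a b, le a b -> le b a -> a = b;
  le_trans : forall a b c, le a b -> le b c -> le a c;
  le_compat_r : forall a b c g, le a b -> le (op a g c) (op b g c);
  le_compat_l : forall a b c g, le a b -> le (op c g a) (op c g b);
  M_nonempty : exists x : M, True;
  G_nonempty : exists g : G, True
}.

Section Defs.
Context {M G : Type} (S : poGammaSemigroup M G).

Local Notation "a ∘[ g ] b" := (op S a g b) (at level 40, left associativity).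

Definition GProd (A B : M -> Prop) : M -> Prop :=
  fun t => exists a g b, A a /\ B b /\ t = a ∘[g] b.

Definition down (A : M -> Prop) : M -> Prop :=
  fun t => exists a, A a /\ le S t a.

Definition single (a : M) : M -> Prop := fun t => t = a.
Definition full : M -> Prop := fun _ => True.

Definition left_regular : Prop :=
  forall a, down (GProd (GProd full (single a)) (single a)) a.

Definition right_regular : Prop :=
  forall a, down (GProd (GProd (single a) (single a)) full) a.

Definition sub_gamma_semigroup (T : M -> Prop) : Prop :=
  (exists t, T t) /\ forall a g b, T a -> T b -> T (a ∘[g] b).

Definition strongly_regular_on (T : M -> Prop) : Prop :=
  forall a, T a -> exists x g m, T x /\
    le S a (a ∘[g] x ∘[m] a) /\
    a ∘[g] x = x ∘[g] a /\ x ∘[g] a = x ∘[m] a /\ x ∘[m] a = a ∘[m] x.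

Definition strongly_regular : Prop := strongly_regular_on full.

Definition MaM (a : M) : M -> Prop :=
  down (GProd (GProd full (single a)) full).

End Defs.

Definition cond2 {M G} (S : poGammaSemigroup M G) : Prop :=
  left_regular S /\ right_regular S /\
  (forall a, sub_gamma_semigroup S (MaM S a) /\ strongly_regular_on S (MaM S a)).

Definition cond3 {M G} (S : poGammaSemigroup M G) : Prop :=
  forall a, (down S (GProd S full (single a)) a /\ down S (GProd S (single a) full) a) /\
            sub_gamma_semigroup S (MaM S a) /\ strongly_regular_on S (MaM S a).

(* Everything rests on one computation: if x is a strong inverse of a for (g, m), so that
   e := a g x = x g a = x m a = a m x, then y := x m e is again a strong inverse of a, and
   y lies in every two-sided ideal containing a.  Hence every ideal (M Γ a Γ M] of a
   strongly regular M is strongly regular.  Conversely a strong inverse gives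
   a <= (x g a) m a and a <= (a g a) m x (left and right regularity), these give
   a ∈ (M Γ a] ∩ (a Γ M], which puts a into its own ideal (M Γ a Γ M], where its strong
   inverse can be found. *)

Section PoGammaSemigroup.
Context {M G : Type} (S : poGammaSemigroup M G).
Local Notation "a ∘[ g ] b" := (op S a g b) (at level 40, left associativity).
Local Notation le := (le S).

Lemma GProd_intro {A B : M -> Prop} a g b : A a -> B b -> GProd S A B (a ∘[g] b).
Proof. intros Ha Hb. exists a, g, b. auto. Qed.

Lemma single_self (a : M) : single a a.
Proof. reflexivity. Qed.

Lemma down_intro {A : M -> Prop} {a b} : A b -> le a b -> down S A a.
Proof. intros Hb Hab. exists b. auto. Qed.

Lemma down_sub {A B : M -> Prop} {a} : (forall t, A t -> B t) -> down S A a -> down S B a.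
Proof. intros HAB [b [Hb Hab]]. exists b. auto. Qed.

Lemma GProd_full_l_absorb {A B : M -> Prop} t :
  GProd S (GProd S (full (M:=M)) A) B t -> GProd S (full (M:=M)) B t.
Proof.
  intros [c [g [b [_ [Hb ->]]]]].
  now apply GProd_intro.
Qed.

Lemma GProd_full_r_absorb {A B : M -> Prop} t :
  GProd S (GProd S A B) (full (M:=M)) t -> GProd S A (full (M:=M)) t.
Proof.
  intros [c [g [v [[a [h [b [Ha [_ ->]]]]] [_ ->]]]]].
  rewrite op_assoc. apply GProd_intro; [exact Ha | exact I].
Qed.

Definition two_sided_ideal (T : M -> Prop) : Prop :=
  (forall t h z, T t -> T (t ∘[h] z)) /\ (forall t h z, T t -> T (z ∘[h] t)).

Lemma MaM_ideal a : two_sided_ideal (MaM S a).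
Proof.
  split; intros t h z [w [[c [g [b [[u [k [a' [_ [Ha' ->]]]]] [_ ->]]]]] Htw]];
    unfold single in Ha'; subst a'.
  - apply (down_intro (GProd_intro _ g (b ∘[h] z) (GProd_intro u k a I (single_self a)) I)).
    rewrite <- op_assoc. now apply le_compat_r.
  - apply (down_intro (GProd_intro _ g b (GProd_intro (z ∘[h] u) k a I (single_self a)) I)).
    rewrite !op_assoc. apply le_compat_l. now rewrite <- op_assoc.
Qed.

Lemma two_sided_ideal_sub_gamma_semigroup {T : M -> Prop} {t} :
  two_sided_ideal T -> T t -> sub_gamma_semigroup S T.
Proof.
  intros [HR _] Ht. split; [now exists t |].
  intros a g b Ha _. now apply HR.
Qed.

Lemma MaM_self {a} :
  down S (GProd S (full (M:=M)) (single a)) a -> down S (GProd S (single a) (full (M:=M))) a ->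
  MaM S a a.
Proof.
  intros [b [[u [g [a' [_ [Ha' ->]]]]] Hab]] [c [[a'' [m [v [Ha'' [_ ->]]]]] Hac]].
  unfold single in Ha', Ha''; subst a' a''.
  apply (down_intro (GProd_intro (u ∘[g] a) m v (GProd_intro u g a I (single_self a)) I)).
  apply (le_trans S _ _ _ Hab). rewrite op_assoc. now apply le_compat_l.
Qed.

Lemma left_regular_down_left :
  left_regular S -> forall a, down S (GProd S (full (M:=M)) (single a)) a.
Proof. intros LR a. exact (down_sub (GProd_full_l_absorb (A := single a)) (LR a)). Qed.

Lemma right_regular_down_right :
  right_regular S -> forall a, down S (GProd S (single a) (full (M:=M))) a.
Proof. intros RR a. exact (down_sub (GProd_full_r_absorb (A := single a)) (RR a)). Qed.

Definition strong_inverse (a x : M) (g m : G) : Prop :=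
  le a (a ∘[g] x ∘[m] a) /\
  a ∘[g] x = x ∘[g] a /\ x ∘[g] a = x ∘[m] a /\ x ∘[m] a = a ∘[m] x.

Lemma strong_inverse_left_regular {a x g m} :
  strong_inverse a x g m -> down S (GProd S (GProd S (full (M:=M)) (single a)) (single a)) a.
Proof.
  intros [Hle [Egx _]].
  apply (down_intro
    (GProd_intro (x ∘[g] a) m a (GProd_intro x g a I (single_self a)) (single_self a))).
  now rewrite <- Egx.
Qed.

Lemma strong_inverse_right_regular {a x g m} :
  strong_inverse a x g m -> down S (GProd S (GProd S (single a) (single a)) (full (M:=M))) a.
Proof.
  intros [Hle [_ [_ Exm]]].
  apply (down_intro
    (GProd_intro (a ∘[g] a) m x (GProd_intro a g a (single_self a) (single_self a)) I)).
  now rewrite op_assoc, <- Exm, <- op_assoc.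
Qed.

(* With e := a g x, the four products of a with y := x m e all equal e m e, and
   a <= e m a <= e m (e m a) = a g y m a. *)
Lemma strong_inverse_refine {a x g m} :
  strong_inverse a x g m -> strong_inverse a (x ∘[m] (a ∘[g] x)) g m.
Proof.
  intros [Hle [Egx [Exg Exm]]].
  assert (Exga : x ∘[g] a = a ∘[g] x) by congruence.
  assert (Exma : x ∘[m] a = a ∘[g] x) by congruence.
  assert (Eamx : a ∘[m] x = a ∘[g] x) by congruence.
  assert (Ey : x ∘[m] (a ∘[g] x) = a ∘[g] x ∘[g] x) by now rewrite <- op_assoc, Exma.
  assert (Esq : a ∘[g] x ∘[m] (a ∘[g] x) = a ∘[g] x ∘[g] (a ∘[g] x)).
  { rewrite op_assoc, Ey, (op_assoc S a x (a ∘[g] x)), <- (op_assoc S x a x), Exga.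
    reflexivity. }
  assert (Eay : a ∘[g] (x ∘[m] (a ∘[g] x)) = a ∘[g] x ∘[m] (a ∘[g] x))
    by now rewrite <- op_assoc.
  assert (Eya : x ∘[m] (a ∘[g] x) ∘[g] a = a ∘[g] x ∘[m] (a ∘[g] x))
    by now rewrite Ey, op_assoc, Exga, Esq.
  assert (Eyma : x ∘[m] (a ∘[g] x) ∘[m] a = a ∘[g] x ∘[m] (a ∘[g] x))
    by now rewrite Ey, op_assoc, Exma, Esq.
  assert (Eamy : a ∘[m] (x ∘[m] (a ∘[g] x)) = a ∘[g] x ∘[m] (a ∘[g] x))
    by now rewrite <- op_assoc, Eamx.
  repeat split; try congruence.
  rewrite Eay, op_assoc.
  apply (le_trans S _ _ _ Hle). now apply le_compat_l.
Qed.

Lemma ideal_strongly_regular {T : M -> Prop} :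
  strongly_regular S -> two_sided_ideal T -> strongly_regular_on S T.
Proof.
  intros SR [HR HL] a Ha.
  destruct (SR a I) as [x [g [m [_ Hx]]]].
  exists (x ∘[m] (a ∘[g] x)), g, m.
  split; [now apply HL, HR | exact (strong_inverse_refine Hx)].
Qed.

Lemma strongly_regular_left_regular : strongly_regular S -> left_regular S.
Proof. intros SR a. destruct (SR a I) as [x [g [m [_ Hx]]]]. exact (strong_inverse_left_regular Hx). Qed.

Lemma strongly_regular_right_regular : strongly_regular S -> right_regular S.
Proof. intros SR a. destruct (SR a I) as [x [g [m [_ Hx]]]]. exact (strong_inverse_right_regular Hx). Qed.

End PoGammaSemigroup.

Theorem theorem9 (M G : Type) (S : poGammaSemigroup M G) :
  (strongly_regular S <-> cond2 S) /\ (cond2 S <-> cond3 S).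
Proof.
  assert (SR_cond2 : strongly_regular S -> cond2 S).
  { intros SR.
    pose proof (strongly_regular_left_regular S SR) as LR.
    pose proof (strongly_regular_right_regular S SR) as RR.
    split; [exact LR | split; [exact RR |]].
    intros a. split.
    - exact (two_sided_ideal_sub_gamma_semigroup S (MaM_ideal S a)
        (MaM_self S (left_regular_down_left S LR a) (right_regular_down_right S RR a))).
    - exact (ideal_strongly_regular S SR (MaM_ideal S a)). }
  assert (cond2_cond3 : cond2 S -> cond3 S).
  { intros [LR [RR HMaM]] a.
    exact (conj (conj (left_regular_down_left S LR a) (right_regular_down_right S RR a)) (HMaM a)). }
  assert (cond3_SR : cond3 S -> strongly_regular S).
  { intros H3 a _.
    destruct (H3 a) as [[Hl Hr] [_ SRa]].
    destruct (SRa a (MaM_self S Hl Hr)) as [x [g [m [_ Hx]]]].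
    now exists x, g, m. }
  tauto.
Qed.
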